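(* Let $\{T^k\}_k$ and $(\mathbf{P}_t)_t$ satisfy the standing assumptions (i) and (ii), and let $\pi$ be a probability distribution on $\mathcal{S}$. Then there exists a sequence of root estimators that is consistent for $\{T^k\}_k$, $(\mathbf{P}_t)_t$ and $\pi$ if and only if for all $i\ne j\in\mathcal{S}$ with $\pi(i)\wedge\pi(j)>0$, $$\liminf_{k\to\infty}\|\mathcal{L}^i_{T^k}-\mathcal{L}^j_{T^k}\|_{\mathrm{TV}}=1.$$
   Context: Trees: finite rooted trees $T=(V,E,\rho,\ell)$ with positive edge lengths, viewed as metric objects; leaves $\partial T$. Markov process on countable $\mathcal{S}$ with transition matrices $\mathbf{P}_t=(p_{ij}(t))$ and stable conservative $Q$-matrix. A $\mathbf{P}_t$-chain on $T$: root state $X_\rho$, then along each edge $(u,v)$ run the chain from $X_u$ for time $\ell_{(u,v)}$, independently on outgoing edges given the branching state. $\mathbb{P}^i$, $\mathbb{P}^\pi$: laws with root state $i$, resp. drawn from $\pi$. $\mathcal{L}^i_T$ denotes the law of the leaf states $(X_u)_{u\in\partial T}$ under $\mathbb{P}^i$. Standing assumptions: $\{T^k\}$ nested with common root ($T^{k-1}$ is the restriction of $T^k$ to a subset of its leaves), $|\partial T^k|=k$; (i) uniformly bounded height; (ii) for every $t$ the rows of $\mathbf{P}_t$ are distinct. $X^k$ is a $\mathbf{P}_t$-chain on $T^k$ with root distribution $\pi$; root estimators $F_k:\mathcal{S}^{\partial T^k}\to\mathcal{S}$ are consistent if $\liminf_k\mathbb{P}^\pi[F_k(X^k_{\partial T^k})=X^k_\rho]=1$.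 TV distance $\|\mu_1-\mu_2\|_{\mathrm{TV}}=\frac12\sum_\sigma|\mu_1(\sigma)-\mu_2(\sigma)|$. *)

From Stdlib Require Import Reals Lra Lia List Classical ClassicalEpsilon.
Import ListNotations.
Open Scope R_scope.

(* A countable type S is given together with an injection [enc : S -> nat].
   [termS enc f n] is f(s) if n = enc s, and 0 if n is not in the image. *)
Definition termS {S : Type} (enc : S -> nat) (f : S -> R) (n : nat) : R :=
  match excluded_middle_informative (exists s, enc s = n) with
  | left H => f (proj1_sig (constructive_indefinite_description _ H))
  | right _ => 0
  end.

Definition has_sumS {S : Type} (enc : S -> nat) (f : S -> R) (l : R) : Prop :=
  infinite_sum (termS enc f) l.

(* value of the sum (used only for non-negative summable families, where the
   sum is well defined and independent of the enumeration) *)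
Definition sumS {S : Type} (enc : S -> nat) (f : S -> R) : R :=
  epsilon (inhabits 0) (fun l => has_sumS enc f l).

(* sum over configurations sigma in S^n (lists of length n), as an iterated
   sum (equal to the full sum for non-negative summands, by Tonelli) *)
Fixpoint sumSn {S : Type} (enc : S -> nat) (n : nat) (F : list S -> R) : R :=
  match n with
  | O => F []
  | Datatypes.S n' => sumS enc (fun s => sumSn enc n' (fun r => F (s :: r)))
  end.

Definition tv {S : Type} (enc : S -> nat) (n : nat) (mu nu : list S -> R) : R :=
  / 2 * sumSn enc n (fun sigma => Rabs (mu sigma - nu sigma)).

Definition is_distr {S : Type} (enc : S -> nat) (pi : S -> R) : Prop :=
  (forall i, 0 <= pi i) /\ has_sumS enc pi 1.

Definition delta {S : Type} (i j : S) : R :=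
  if excluded_middle_informative (i = j) then 1 else 0.

Definition is_markov_semigroup {S : Type} (enc : S -> nat) (p : R -> S -> S -> R) : Prop :=
  (forall t i j, 0 <= t -> 0 <= p t i j) /\
  (forall t i, 0 <= t -> has_sumS enc (fun j => p t i j) 1) /\
  (forall i j, p 0 i j = delta i j) /\
  (forall s t i j, 0 <= s -> 0 <= t ->
      has_sumS enc (fun k => p s i k * p t k j) (p (s + t) i j)) /\
  (* Q-matrix: q i j = right derivative at 0 of p . i j; finite values
     (stable), and conservative: sum_{j <> i} q i j = - q i i *)
  exists q : S -> S -> R,
    (forall i j, limit1_in (fun t => (p t i j - delta i j) / t)
                           (fun t => 0 < t) (q i j) 0) /\
    (forall i, has_sumS enc (fun j => if excluded_middle_informative (i = j)
                                      then 0 else q i j) (- q i i)).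

(* A rooted tree: a node with a list of (edge length, child subtree).
   Leaves are the nodes with no children; they are ordered left to right. *)
Inductive tree : Type := Node : list (R * tree) -> tree.

Fixpoint nleaves (t : tree) : nat :=
  match t with
  | Node [] => 1%nat
  | Node cs =>
      (fix g (cs : list (R * tree)) : nat :=
         match cs with
         | [] => 0%nat
         | (_, c) :: cs' => (nleaves c + g cs')%nat
         end) cs
  end.

Fixpoint edges_pos (t : tree) : Prop :=
  match t with
  | Node cs =>
      (fix g (cs : list (R * tree)) : Prop :=
         match cs with
         | [] => True
         | (l, c) :: cs' => 0 < l /\ edges_pos c /\ g cs'
         end) cs
  end.

Fixpoint height (t : tree) : R :=
  match t with
  | Node cs =>
      (fix g (cs : list (R * tree)) : R :=
         match cs with
         | [] => 0
         | (l, c) :: cs' => Rmax (l + height c) (g cs')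
         end) cs
  end.

(* restriction of a tree to the leaves selected by a mask (left-to-right
   order): the subtree spanned by the root and the selected leaves *)
Fixpoint restrict (t : tree) (m : list bool) : option tree :=
  match t with
  | Node [] => match m with true :: _ => Some (Node []) | _ => None end
  | Node cs =>
      let cs' :=
        (fix g (cs : list (R * tree)) (m : list bool) : list (R * tree) :=
           match cs with
           | [] => []
           | (l, c) :: cs'' =>
               match restrict c (firstn (nleaves c) m) with
               | Some c' => (l, c') :: g cs'' (skipn (nleaves c) m)
               | None => g cs'' (skipn (nleaves c) m)
               end
           end) cs m in
      match cs' with [] => None | _ => Some (Node cs') end
  end.

(* metric normal form: suppress non-root vertices of degree 2 (one child),
   merging the two incident edges and adding their lengths *)
Fixpoint norm_edge (l : R) (t : tree) : R * tree :=
  match t with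
  | Node [(l', t')] => norm_edge (l + l') t'
  | Node cs =>
      (l, Node ((fix g (cs : list (R * tree)) : list (R * tree) :=
                   match cs with
                   | [] => []
                   | (l', c) :: cs' => norm_edge l' c :: g cs'
                   end) cs))
  end.

Definition norm_tree (t : tree) : tree :=
  match t with Node cs => Node (map (fun e => norm_edge (fst e) (snd e)) cs) end.

(* {T k} nested with common root: T (k-1) is (as a metric rooted tree with
   labelled leaves) the restriction of T k to k-1 of its leaves *)
Definition nested (T : nat -> tree) : Prop :=
  forall k, (2 <= k)%nat ->
    exists m : list bool, length m = k /\ count_occ Bool.bool_dec m true = (k - 1)%nat /\
      exists t', restrict (T k) m = Some t' /\ norm_tree (T (k - 1)%nat) = norm_tree t'.

(* lawT enc p t i sigma = P^i[ leaf states (left to right) = sigma ] *)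
Fixpoint lawT {S : Type} (enc : S -> nat) (p : R -> S -> S -> R)
    (t : tree) (i : S) (sigma : list S) : R :=
  match t with
  | Node [] => match sigma with [x] => delta x i | _ => 0 end
  | Node cs =>
      (fix g (cs : list (R * tree)) (sigma : list S) : R :=
         match cs with
         | [] => match sigma with [] => 1 | _ => 0 end
         | (l, c) :: cs' =>
             sumS enc (fun j => p l i j * lawT enc p c j (firstn (nleaves c) sigma))
             * g cs' (skipn (nleaves c) sigma)
         end) cs sigma
  end.

Definition liminf_is (u : nat -> R) (l : R) : Prop :=
  (forall eps, 0 < eps -> exists N, forall n, (N <= n)%nat -> l - eps < u n) /\
  (forall eps, 0 < eps -> forall N, exists n, (N <= n)%nat /\ u n < l + eps).

(* P^pi[ F_k(X_{leaves}) = X_root ] for the chain on T k *)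
Definition prob_correct {S : Type} (enc : S -> nat) (p : R -> S -> S -> R)
    (T : nat -> tree) (pi : S -> R) (F : nat -> list S -> S) (k : nat) : R :=
  sumS enc (fun i => pi i *
    sumSn enc k (fun sigma => lawT enc p (T k) i sigma * delta (F k sigma) i)).

Definition consistent {S : Type} (enc : S -> nat) (p : R -> S -> S -> R)
    (T : nat -> tree) (pi : S -> R) (F : nat -> list S -> S) : Prop :=
  liminf_is (prob_correct enc p T pi F) 1.

From Stdlib Require Import Reals Lra Lia List Classical ClassicalEpsilon FunctionalExtensionality.
From Stdlib Require FinFun.
Import ListNotations.
Open Scope R_scope.

(* Only one property of the trees and of the chain enters: for every root state the
   leaf states on [T k] have a probability law on [S^k].

   If an estimator is correct with probability close to 1 under [pi], it is so under
   each root state of positive mass, and since on each leaf configuration it guesses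
   at most one of two states [i], [j], its two hit probabilities add up to at most
   [1 + TV(L^i, L^j)]; hence the TV distance tends to 1.  Conversely, choose a finite
   set [A] of states carrying most of the mass of [pi] and guess the most likely
   state of [A]: under root state [i] this fails only where some other [j] in [A] is
   at least as likely, an event of probability at most [1 - TV(L^i, L^j)].  Letting
   [A] grow slowly with [k] yields a consistent estimator.

   Sums over the countable state space and over [S^k] are handled through unordered
   sums of nonnegative families (suprema of finite sums), which support Fubini and
   reindexing and agree with the series of the definitions. *)

Definition fsum {X : Type} (f : X -> R) (L : list X) : R :=
  fold_right (fun x acc => f x + acc) 0 L.

Section FiniteSums.
Context {X : Type}.
Implicit Types (f g : X -> R) (L : list X).

Lemma fsum_app f L1 L2 : fsum f (L1 ++ L2) = fsum f L1 + fsum f L2.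
Proof. induction L1; simpl; [ring | rewrite IHL1; ring]. Qed.

Lemma fsum_add f g L : fsum (fun x => f x + g x) L = fsum f L + fsum g L.
Proof. induction L; simpl; [ring | rewrite IHL; ring]. Qed.

Lemma fsum_sub f g L : fsum (fun x => f x - g x) L = fsum f L - fsum g L.
Proof. induction L; simpl; [ring | rewrite IHL; ring]. Qed.

Lemma fsum_scale f c L : fsum (fun x => c * f x) L = c * fsum f L.
Proof. induction L; simpl; [ring | rewrite IHL; ring]. Qed.

Lemma fsum_ext f g L : (forall x, In x L -> f x = g x) -> fsum f L = fsum g L.
Proof. induction L; simpl; intros H; [reflexivity | rewrite H, IHL; auto]. Qed.

Lemma fsum_le f g L : (forall x, In x L -> f x <= g x) -> fsum f L <= fsum g L.
Proof.
  induction L as [|a L IH]; simpl; intros H; [lra|].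
  pose proof (H a (or_introl eq_refl)). pose proof (IH (fun x h => H x (or_intror h))). lra.
Qed.

Lemma fsum_ge0 f L : (forall x, In x L -> 0 <= f x) -> 0 <= fsum f L.
Proof.
  intros H. replace 0 with (fsum (fun _ => 0) L); [apply fsum_le; auto|].
  induction L; simpl; [reflexivity | rewrite IHL; [ring|]]. intros; apply H; simpl; auto.
Qed.

Lemma fsum_eq0 f L : (forall x, In x L -> f x = 0) -> fsum f L = 0.
Proof.
  induction L; simpl; intros H; [reflexivity|].
  rewrite H, IHL; [ring| |]; simpl; auto.
Qed.

Lemma fsum_map {Y} (f : Y -> R) (phi : X -> Y) L : fsum f (map phi L) = fsum (fun x => f (phi x)) L.
Proof. induction L; simpl; [reflexivity | rewrite IHL; reflexivity]. Qed.

Lemma fsum_term_le f L x : In x L -> (forall y, In y L -> 0 <= f y) -> f x <= fsum f L.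
Proof.
  induction L as [|a L IH]; intros Hx Hf; [destruct Hx|]. simpl.
  assert (Hf' : forall y, In y L -> 0 <= f y) by (intros; apply Hf; simpl; auto).
  destruct Hx as [<-|Hx].
  - pose proof (fsum_ge0 f L Hf'). lra.
  - pose proof (Hf a (or_introl eq_refl)). pose proof (IH Hx Hf'). lra.
Qed.

Lemma fsum_le_incl f L L' :
  NoDup L -> NoDup L' -> incl L L' -> (forall x, In x L' -> 0 <= f x) -> fsum f L <= fsum f L'.
Proof.
  revert L'. induction L as [|a L IH]; intros L' ND ND' Hi Hf.
  - apply fsum_ge0; auto.
  - assert (Ha : In a L') by (apply Hi; simpl; auto).
    destruct (in_split _ _ Ha) as [l1 [l2 ->]].
    inversion ND; subst.
    assert (H : fsum f L <= fsum f (l1 ++ l2)).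
    { apply IH; auto.
      - eapply NoDup_remove_1; eauto.
      - intros x Hx. assert (Hx' : In x (l1 ++ a :: l2)) by (apply Hi; simpl; auto).
        apply in_app_or in Hx'. apply in_or_app. destruct Hx' as [H|[H|H]]; subst; tauto.
      - intros x Hx. apply Hf. apply in_app_or in Hx. apply in_or_app. simpl. tauto. }
    rewrite fsum_app in H. rewrite fsum_app. simpl. lra.
Qed.

End FiniteSums.

Lemma fsum_list_prod {X Y} (h : X -> Y -> R) (L : list X) (L2 : list Y) :
  fsum (fun z => h (fst z) (snd z)) (list_prod L L2) = fsum (fun x => fsum (h x) L2) L.
Proof. induction L; simpl; [reflexivity | rewrite fsum_app, IHL, fsum_map; reflexivity]. Qed.

Definition classic_eq_dec {X : Type} : forall x y : X, {x = y} + {x <> y} :=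
  fun x y => excluded_middle_informative (x = y).

Definition all_in {X : Type} (D : X -> Prop) (L : list X) : Prop := forall x, In x L -> D x.

Definition nonneg_on {X : Type} (D : X -> Prop) (f : X -> R) : Prop := forall x, D x -> 0 <= f x.

(* The sum of [f] over the set [D], as the supremum of its finite sums over
   duplicate-free lists of elements of [D]; meant for nonnegative [f]. *)
Definition is_sum_on {X : Type} (D : X -> Prop) (f : X -> R) (l : R) : Prop :=
  (forall L, NoDup L -> all_in D L -> fsum f L <= l) /\
  (forall eps, 0 < eps -> exists L, NoDup L /\ all_in D L /\ l - eps < fsum f L).

Definition full {X : Type} (x : X) : Prop := True.

Section UnorderedSums.
Context {X : Type} (D : X -> Prop).
Implicit Types (f g : X -> R).

Lemma all_in_nil : all_in D [].
Proof. intros x []. Qed.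

Lemma sum_on_unique f a b : is_sum_on D f a -> is_sum_on D f b -> a = b.
Proof.
  intros [Ua La] [Ub Lb].
  destruct (Rtotal_order a b) as [H|[H|H]]; auto.
  - destruct (Lb (b - a)) as [L [N [I H']]]; [lra|]. specialize (Ua L N I). lra.
  - destruct (La (a - b)) as [L [N [I H']]]; [lra|]. specialize (Ub L N I). lra.
Qed.

Lemma sum_on_ge0 f a : is_sum_on D f a -> 0 <= a.
Proof. intros [U _]. apply (U []); [constructor | apply all_in_nil]. Qed.

Lemma sum_on_term_le f a x : is_sum_on D f a -> D x -> f x <= a.
Proof.
  intros [U _] Hx.
  assert (H : fsum f [x] <= a) by (apply U; [repeat constructor; auto | intros y [<-|[]]; auto]).
  simpl in H. lra.
Qed.

Lemma sum_on_exists f B :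
  (forall L, NoDup L -> all_in D L -> fsum f L <= B) -> exists l, is_sum_on D f l.
Proof.
  intros HB.
  set (E := fun r => exists L, NoDup L /\ all_in D L /\ r = fsum f L).
  assert (Hb : bound E) by (exists B; intros r [L [N [I ->]]]; auto).
  assert (He : exists x, E x) by (exists 0, []; repeat split; [constructor | apply all_in_nil]).
  destruct (completeness E Hb He) as [m [Hub Hlub]].
  exists m. split.
  - intros L N I. apply Hub. exists L; auto.
  - intros eps Heps. apply NNPP; intro Hn.
    assert (Hm : is_upper_bound E (m - eps)).
    { intros r [L [N [I ->]]]. apply Rnot_lt_le. intro Hc. apply Hn. exists L; auto. }
    specialize (Hlub _ Hm). lra.
Qed.

Lemma sum_on_le f g a b :
  (forall x, D x -> f x <= g x) -> is_sum_on D f a -> is_sum_on D g b -> a <= b.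
Proof.
  intros Hfg [Ua La] [Ub Lb]. apply Rnot_lt_le; intro H.
  destruct (La (a - b)) as [L [N [I H']]]; [lra|].
  specialize (Ub L N I). assert (fsum f L <= fsum g L) by (apply fsum_le; auto). lra.
Qed.

Lemma sum_on_ext f g a :
  (forall x, D x -> f x = g x) -> is_sum_on D f a -> is_sum_on D g a.
Proof.
  intros Hfg [U Lo].
  assert (E : forall L, all_in D L -> fsum f L = fsum g L) by (intros L I; apply fsum_ext; auto).
  split.
  - intros L N I. rewrite <- E; auto.
  - intros eps He. destruct (Lo eps He) as [L [N [I H]]]. exists L. rewrite <- E; auto.
Qed.

Lemma sum_on_bounded f a :
  nonneg_on D f -> is_sum_on D f a -> forall g, nonneg_on D g -> (forall x, D x -> g x <= f x) ->
  exists b, is_sum_on D g b /\ b <= a.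
Proof.
  intros Hf Ha g Hg Hgf.
  destruct (sum_on_exists g a) as [b Hb].
  { intros L N I. eapply Rle_trans; [| apply (proj1 Ha L N I)]. apply fsum_le; auto. }
  exists b. split; auto. eapply sum_on_le; eauto.
Qed.

Lemma sum_on_add f g a b : nonneg_on D f -> nonneg_on D g ->
  is_sum_on D f a -> is_sum_on D g b -> is_sum_on D (fun x => f x + g x) (a + b).
Proof.
  intros Hf Hg [Ua La] [Ub Lb]. split.
  - intros L N I. rewrite fsum_add. specialize (Ua L N I). specialize (Ub L N I). lra.
  - intros eps He.
    destruct (La (eps/2)) as [L1 [N1 [I1 H1]]]; [lra|].
    destruct (Lb (eps/2)) as [L2 [N2 [I2 H2]]]; [lra|].
    set (L := nodup classic_eq_dec (L1 ++ L2)).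
    assert (IL : all_in D L) by (intros x Hx; apply nodup_In, in_app_or in Hx; destruct Hx; auto).
    assert (incl L1 L /\ incl L2 L) as [i1 i2]
      by (split; intros x Hx; apply nodup_In, in_or_app; auto).
    exists L. repeat split; [apply NoDup_nodup | exact IL |]. rewrite fsum_add.
    assert (fsum f L1 <= fsum f L) by (apply fsum_le_incl; auto; apply NoDup_nodup).
    assert (fsum g L2 <= fsum g L) by (apply fsum_le_incl; auto; apply NoDup_nodup).
    lra.
Qed.

Lemma sum_on_scale f a c : 0 <= c -> nonneg_on D f ->
  is_sum_on D f a -> is_sum_on D (fun x => c * f x) (c * a).
Proof.
  intros Hc Hf [Ua La]. split.
  - intros L N I. rewrite fsum_scale. apply Rmult_le_compat_l; auto.
  - intros eps He. destruct (Req_dec c 0) as [->|Hc0].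
    + exists []. repeat split; [constructor | apply all_in_nil |]. simpl. lra.
    + destruct (La (eps / c)) as [L [N [I H]]]; [apply Rdiv_lt_0_compat; lra|].
      exists L; repeat split; auto. rewrite fsum_scale.
      assert (H' : c * (a - eps / c) < c * fsum f L) by (apply Rmult_lt_compat_l; lra).
      replace (c * (a - eps / c)) with (c * a - eps) in H' by (field; auto). lra.
Qed.

Lemma sum_on_sub f g a b : nonneg_on D f -> nonneg_on D g ->
  is_sum_on D f a -> is_sum_on D (fun x => f x + g x) b -> is_sum_on D g (b - a).
Proof.
  intros Hf Hg Ha Hb.
  destruct (sum_on_exists g b) as [c Hc].
  { intros L N I. pose proof (proj1 Hb L N I) as U. rewrite fsum_add in U.
    assert (0 <= fsum f L) by (apply fsum_ge0; auto). lra. }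
  pose proof (sum_on_unique _ _ _ (sum_on_add f g a c Hf Hg Ha Hc) Hb).
  replace (b - a) with c by lra. auto.
Qed.

Lemma sum_on_0 f : (forall x, D x -> f x = 0) -> is_sum_on D f 0.
Proof.
  intros H. split.
  - intros L N I. rewrite fsum_eq0; auto. lra.
  - intros eps He. exists []. repeat split; [constructor | apply all_in_nil |]. simpl; lra.
Qed.

Lemma sum_on_single f a : D a -> (forall x, D x -> x <> a -> f x = 0) ->
  nonneg_on D f -> is_sum_on D f (f a).
Proof.
  intros Da H Hf.
  assert (Hoff : forall L, all_in D L -> ~ In a L -> fsum f L = 0)
    by (intros L I Ha; apply fsum_eq0; intros x Hx; apply H; [apply I; auto | intros ->; auto]).
  split.
  - intros L N I. destruct (in_dec classic_eq_dec a L) as [Hin|Hout].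
    + destruct (in_split _ _ Hin) as [l1 [l2 ->]]. apply NoDup_remove_2 in N.
      assert (Z : fsum f (l1 ++ l2) = 0).
      { apply Hoff; auto. intros x Hx. apply I, in_or_app. apply in_app_or in Hx. simpl. tauto. }
      rewrite fsum_app in Z. rewrite fsum_app. simpl. lra.
    + rewrite Hoff by auto. apply Hf; auto.
  - intros eps He. exists [a]. repeat split; [repeat constructor; auto | intros x [<-|[]]; auto |].
    simpl; lra.
Qed.

Lemma sum_on_fsum {Y} (G : Y -> X -> R) (s : Y -> R) (A : list Y) :
  (forall j, In j A -> nonneg_on D (G j)) -> (forall j, In j A -> is_sum_on D (G j) (s j)) ->
  is_sum_on D (fun x => fsum (fun j => G j x) A) (fsum s A).
Proof.
  induction A as [|a A IH]; intros Hn Hs; simpl.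
  - apply sum_on_0; auto.
  - apply sum_on_add; [apply Hn; simpl; auto | | apply Hs; simpl; auto |].
    + intros x Hx. apply fsum_ge0. intros j Hj. apply Hn; simpl; auto.
    + apply IH; intros; [apply Hn | apply Hs]; simpl; auto.
Qed.

End UnorderedSums.

Lemma sum_on_bij {X Y} (DX : X -> Prop) (DY : Y -> Prop) (phi : X -> Y) (f : Y -> R) l :
  (forall x, DX x -> DY (phi x)) ->
  (forall x y, DX x -> DX y -> phi x = phi y -> x = y) ->
  (forall y, DY y -> exists x, DX x /\ phi x = y) ->
  is_sum_on DX (fun x => f (phi x)) l <-> is_sum_on DY f l.
Proof.
  intros Hm Hi Hs.
  assert (Himage : forall L, NoDup L -> all_in DX L -> NoDup (map phi L) /\ all_in DY (map phi L)).
  { induction L as [|a L IH]; intros N I; simpl; [split; [constructor | apply all_in_nil]|].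
    inversion N; subst. destruct IH as [N' I']; auto. { intros x Hx; apply I; simpl; auto. }
    split.
    - constructor; auto. intro Hin. apply in_map_iff in Hin. destruct Hin as [b [Hb Hb']].
      apply Hi in Hb; subst; auto; apply I; simpl; auto.
    - intros y [<-|Hy]; auto. apply Hm, I; simpl; auto. }
  assert (Hpreimage : forall L', NoDup L' -> all_in DY L' ->
            exists L, NoDup L /\ all_in DX L /\ map phi L = L').
  { induction L' as [|a L' IH]; intros N I.
    { exists []; repeat split; [constructor | apply all_in_nil]. }
    inversion N; subst. destruct IH as [L [NL [IL EL]]]; auto. { intros x Hx; apply I; simpl; auto. }
    destruct (Hs a) as [x [Dx Ex]]. { apply I; simpl; auto. }
    exists (x :: L). repeat split.
    - constructor; auto. intro Hin. apply H1. rewrite <- EL, <- Ex. apply in_map; auto.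
    - intros z [<-|Hz]; auto.
    - simpl. congruence. }
  split; intros [U Lo]; split.
  - intros L' N I. destruct (Hpreimage L' N I) as [L [NL [IL <-]]]. rewrite fsum_map. auto.
  - intros eps He. destruct (Lo eps He) as [L [N [I H]]]. destruct (Himage L N I).
    exists (map phi L). rewrite fsum_map. auto.
  - intros L N I. destruct (Himage L N I). rewrite <- fsum_map. auto.
  - intros eps He. destruct (Lo eps He) as [L' [N [I H]]].
    destruct (Hpreimage L' N I) as [L [NL [IL <-]]].
    exists L. rewrite <- fsum_map. auto.
Qed.

Definition prod_on {X Y} (DX : X -> Prop) (DY : Y -> Prop) (z : X * Y) : Prop :=
  DX (fst z) /\ DY (snd z).

Lemma NoDup_map_pair {X Y} (x : X) (L : list Y) : NoDup L -> NoDup (map (fun y => (x, y)) L).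
Proof.
  intro N. apply FinFun.Injective_map_NoDup; auto. intros y y' E. inversion E; auto.
Qed.

Lemma NoDup_list_prod {X Y} (L1 : list X) (L2 : list Y) :
  NoDup L1 -> NoDup L2 -> NoDup (list_prod L1 L2).
Proof.
  intros N1 N2. induction N1; simpl; [constructor|].
  apply NoDup_app; auto; [apply NoDup_map_pair; auto|].
  intros z Hz1 Hz2. apply in_map_iff in Hz1. destruct Hz1 as [y [<- _]].
  apply in_prod_iff in Hz2. tauto.
Qed.

Section Fubini.
Context {X Y : Type} (DX : X -> Prop) (DY : Y -> Prop) (h : X -> Y -> R).
Hypothesis h_ge0 : forall x y, DX x -> DY y -> 0 <= h x y.

Let hp (z : X * Y) : R := h (fst z) (snd z).

Lemma fsum_row_sums_approx (g : X -> R) Lx :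
  NoDup Lx -> all_in DX Lx -> (forall x, In x Lx -> is_sum_on DY (h x) (g x)) ->
  forall eps, 0 < eps -> exists P, NoDup P /\ all_in (prod_on DX DY) P /\
    (forall z, In z P -> In (fst z) Lx) /\ fsum g Lx - eps < fsum hp P.
Proof.
  induction Lx as [|x Lx IH]; intros N I Hr eps He.
  { exists []. split; [constructor|]. split; [apply all_in_nil|]. split; [intros z []|]. simpl; lra. }
  inversion N; subst.
  destruct (IH H2 (fun y Hy => I y (or_intror Hy)) (fun y Hy => Hr y (or_intror Hy)) (eps/2))
    as [P0 [N0 [I0 [F0 S0]]]]; [lra|].
  destruct (proj2 (Hr x (or_introl eq_refl)) (eps/2)) as [Ly [Ny [Iy Sy]]]; [lra|].
  exists (map (fun y => (x, y)) Ly ++ P0). split; [|split; [|split]].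
  - apply NoDup_app; auto; [apply NoDup_map_pair; auto|].
    intros z Hz1 Hz2. apply in_map_iff in Hz1. destruct Hz1 as [y [<- _]].
    apply F0 in Hz2. simpl in Hz2. auto.
  - intros z Hz. apply in_app_or in Hz. destruct Hz as [Hz|Hz]; [|auto].
    apply in_map_iff in Hz. destruct Hz as [y [<- Hy]]. split; simpl; [apply I; simpl|]; auto.
  - intros z Hz. apply in_app_or in Hz. destruct Hz as [Hz|Hz]; [|right; auto].
    apply in_map_iff in Hz. destruct Hz as [y [<- Hy]]. simpl; auto.
  - rewrite fsum_app, fsum_map. change (fsum (fun y => hp (x, y)) Ly) with (fsum (h x) Ly). simpl. lra.
Qed.

Lemma sum_on_prod_of_rows (g : X -> R) l :
  (forall x, DX x -> is_sum_on DY (h x) (g x)) -> is_sum_on DX g l ->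
  is_sum_on (prod_on DX DY) hp l.
Proof.
  intros Hr [U Lo]. split.
  - intros P N I.
    set (Lx := nodup classic_eq_dec (map fst P)). set (Ly := nodup classic_eq_dec (map snd P)).
    assert (ILx : all_in DX Lx).
    { intros x Hx. apply nodup_In, in_map_iff in Hx. destruct Hx as [z [<- Hz]]. apply I; auto. }
    assert (ILy : all_in DY Ly).
    { intros y Hy. apply nodup_In, in_map_iff in Hy. destruct Hy as [z [<- Hz]]. apply I; auto. }
    apply Rle_trans with (fsum hp (list_prod Lx Ly)).
    { apply fsum_le_incl; auto.
      - apply NoDup_list_prod; apply NoDup_nodup.
      - intros [x y] Hz. apply in_prod_iff.
        split; apply nodup_In; [apply (in_map fst P (x, y)) | apply (in_map snd P (x, y))]; auto.
      - intros [x y] Hz. apply in_prod_iff in Hz. apply h_ge0; [apply ILx | apply ILy]; tauto. }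
    unfold hp. rewrite fsum_list_prod. apply Rle_trans with (fsum g Lx).
    + apply fsum_le. intros x Hx. apply (proj1 (Hr x (ILx x Hx))); auto. apply NoDup_nodup.
    + apply U; auto. apply NoDup_nodup.
  - intros eps He. destruct (Lo (eps/2)) as [Lx [N [I S1]]]; [lra|].
    destruct (fsum_row_sums_approx g Lx N I (fun x Hx => Hr x (I x Hx)) (eps/2))
      as [P [NP [IP [_ SP]]]]; [lra|].
    exists P. split; [|split]; auto. lra.
Qed.

Lemma sum_on_rows_of_prod l :
  is_sum_on (prod_on DX DY) hp l ->
  exists g : X -> R, (forall x, DX x -> is_sum_on DY (h x) (g x)) /\ is_sum_on DX g l.
Proof.
  intros Hl.
  assert (Hrow : forall x, exists r, DX x -> is_sum_on DY (h x) r).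
  { intros x. destruct (classic (DX x)) as [Dx|nDx]; [|exists 0; tauto].
    destruct (sum_on_exists DY (h x) l) as [r Hr]; [|exists r; auto].
    intros L N I. change (fsum (h x) L) with (fsum (fun y => hp (x, y)) L). rewrite <- fsum_map.
    apply (proj1 Hl); [apply NoDup_map_pair; auto|].
    intros z Hz. apply in_map_iff in Hz. destruct Hz as [y [<- Hy]]. split; simpl; auto. }
  destruct (choice _ Hrow) as [g Hg]. exists g. split; auto.
  destruct (sum_on_exists DX g l) as [l' Hl'].
  { intros Lx N I. apply Rnot_lt_le; intro Hc.
    destruct (fsum_row_sums_approx g Lx N I (fun x Hx => Hg x (I x Hx)) (fsum g Lx - l))
      as [P [NP [IP [_ SP]]]]; [lra|].
    pose proof (proj1 Hl P NP IP). lra. }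
  rewrite (sum_on_unique _ _ _ _ Hl (sum_on_prod_of_rows g l' Hg Hl')). auto.
Qed.

End Fubini.

Lemma sum_on_prod_swap {X Y} (DX : X -> Prop) (DY : Y -> Prop) (h : X -> Y -> R) l :
  is_sum_on (prod_on DX DY) (fun z => h (fst z) (snd z)) l ->
  is_sum_on (prod_on DY DX) (fun z => h (snd z) (fst z)) l.
Proof.
  apply (sum_on_bij (prod_on DY DX) (prod_on DX DY) (fun z => (snd z, fst z))
           (fun z => h (fst z) (snd z))).
  - intros [a b] [Ha Hb]; split; auto.
  - intros [a b] [c d] _ _ E. inversion E; auto.
  - intros [a b] [Ha Hb]. exists (b, a). repeat split; auto.
Qed.

Section Enumeration.
Context {S : Type} (enc : S -> nat) (enc_inj : forall x y, enc x = enc y -> x = y).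

Definition decode (n : nat) : option S :=
  match excluded_middle_informative (exists s, enc s = n) with
  | left H => Some (proj1_sig (constructive_indefinite_description _ H))
  | right _ => None
  end.

Lemma termS_decode f n : termS enc f n = match decode n with Some s => f s | None => 0 end.
Proof. unfold termS, decode. destruct (excluded_middle_informative _); reflexivity. Qed.

Lemma decode_Some n s : decode n = Some s -> enc s = n.
Proof.
  unfold decode. destruct (excluded_middle_informative _) as [H|H]; intro E; inversion E.
  destruct (constructive_indefinite_description _ H); simpl; auto.
Qed.

Lemma decode_enc s : decode (enc s) = Some s.
Proof.
  unfold decode. destruct (excluded_middle_informative _) as [H|H].
  - destruct (constructive_indefinite_description _ H) as [x Hx]; simpl. f_equal; auto.
  - exfalso; apply H; eauto.
Qed.

Definition option_list (o : option S) : list S := match o with Some s => [s] | None => [] end.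

Fixpoint enum_upto (N : nat) : list S :=
  match N with
  | O => option_list (decode 0)
  | Datatypes.S N' => enum_upto N' ++ option_list (decode (Datatypes.S N'))
  end.

Lemma sum_f_R0_termS f N : sum_f_R0 (termS enc f) N = fsum f (enum_upto N).
Proof.
  induction N; simpl; rewrite termS_decode.
  - destruct (decode 0); simpl; ring.
  - rewrite fsum_app, IHN. destruct (decode (Datatypes.S N)); simpl; ring.
Qed.

Lemma in_option_list_decode n s : In s (option_list (decode n)) <-> enc s = n.
Proof.
  destruct (decode n) as [x|] eqn:E; simpl; split.
  - intros [<-|[]]. apply decode_Some; auto.
  - intros <-. rewrite decode_enc in E. inversion E; auto.
  - intros [].
  - intros <-. rewrite decode_enc in E. discriminate.
Qed.

Lemma in_enum_upto N s : In s (enum_upto N) <-> (enc s <= N)%nat.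
Proof.
  induction N; simpl.
  - rewrite in_option_list_decode. lia.
  - rewrite in_app_iff, IHN, in_option_list_decode. lia.
Qed.

Lemma NoDup_enum_upto N : NoDup (enum_upto N).
Proof.
  induction N; simpl; [destruct (decode 0); repeat constructor; auto|].
  apply NoDup_app; auto; [destruct (decode (Datatypes.S N)); repeat constructor; auto|].
  intros x H1 H2. apply in_enum_upto in H1. apply in_option_list_decode in H2. lia.
Qed.

Lemma incl_enum_upto (L : list S) : exists N, incl L (enum_upto N).
Proof.
  induction L as [|a L [N HN]]; [exists O; intros s []|].
  exists (Nat.max N (enc a)). intros s [<-|H]; apply in_enum_upto; [lia|].
  apply HN, in_enum_upto in H. lia.
Qed.

Lemma has_sumS_sum_on f l : nonneg_on full f -> (has_sumS enc f l <-> is_sum_on full f l).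
Proof.
  intros Hf.
  assert (Hmono : forall L N, NoDup L -> incl L (enum_upto N) -> fsum f L <= fsum f (enum_upto N))
    by (intros; apply fsum_le_incl; auto; [apply NoDup_enum_upto | intros; apply Hf; exact I]).
  split.
  - intros H.
    assert (Hle : forall N, fsum f (enum_upto N) <= l).
    { intros N. apply Rnot_lt_le; intro Hc. destruct (H (fsum f (enum_upto N) - l)) as [M HM]; [lra|].
      specialize (HM (Nat.max N M) ltac:(lia)). rewrite sum_f_R0_termS in HM. unfold R_dist in HM.
      assert (fsum f (enum_upto N) <= fsum f (enum_upto (Nat.max N M))).
      { apply Hmono; [apply NoDup_enum_upto|].
        intros x Hx. apply in_enum_upto in Hx. apply in_enum_upto. lia. }
      rewrite Rabs_right in HM; lra. }
    split.
    + intros L N _. destruct (incl_enum_upto L) as [M HM].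
      apply Rle_trans with (fsum f (enum_upto M)); auto.
    + intros eps He. destruct (H eps He) as [N HN]. specialize (HN N (le_n _)).
      rewrite sum_f_R0_termS in HN. unfold R_dist in HN. specialize (Hle N).
      exists (enum_upto N). split; [apply NoDup_enum_upto|]. split; [intros x _; exact I|].
      rewrite Rabs_left1 in HN; lra.
  - intros [U Lo] eps He. destruct (Lo eps He) as [L [N [_ H]]].
    destruct (incl_enum_upto L) as [M HM]. exists M. intros n Hn.
    rewrite sum_f_R0_termS. unfold R_dist.
    assert (fsum f (enum_upto n) <= l) by (apply U; [apply NoDup_enum_upto | intros x _; exact I]).
    assert (fsum f L <= fsum f (enum_upto n)).
    { apply Hmono; auto. intros x Hx. apply HM, in_enum_upto in Hx. apply in_enum_upto. lia. }
    rewrite Rabs_left1; lra.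
Qed.

Lemma sumS_eq f l : nonneg_on full f -> is_sum_on full f l -> sumS enc f = l.
Proof.
  intros Hf H. apply (has_sumS_sum_on f l Hf) in H.
  unfold sumS. eapply uniqueness_sum; [|exact H].
  apply (epsilon_spec (inhabits 0) (has_sumS enc f)). eauto.
Qed.

Definition has_length (n : nat) (s : list S) : Prop := length s = n.

Lemma sumSn_eq n : forall F l, nonneg_on (has_length n) F -> is_sum_on (has_length n) F l ->
  sumSn enc n F = l.
Proof.
  induction n as [|n IH]; intros F l HF H; simpl.
  - apply (sum_on_unique (has_length 0) F); auto.
    apply sum_on_single; [reflexivity | | auto]. intros [|x s] Hs Hn; [contradiction | discriminate].
  - assert (Hp : is_sum_on (prod_on full (has_length n)) (fun z => F (fst z :: snd z)) l).
    { apply (sum_on_bij _ (has_length (Datatypes.S n)) (fun z => fst z :: snd z) F); auto.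
      - intros [a r] [_ Hr]. unfold has_length in *; simpl in *; lia.
      - intros [a r] [b q] _ _ E. inversion E; auto.
      - intros [|a r] Hr; [discriminate|].
        exists (a, r). split; [split; [exact I | now injection Hr] | reflexivity]. }
    assert (Hnn : forall s r, full s -> has_length n r -> 0 <= F (s :: r))
      by (intros s r _ Hr; apply HF; unfold has_length in *; simpl; lia).
    destruct (sum_on_rows_of_prod full (has_length n) (fun s r => F (s :: r)) Hnn l Hp)
      as [g [Hg Hgl]].
    assert (E : (fun s => sumSn enc n (fun r => F (s :: r))) = g).
    { apply functional_extensionality. intros s. apply IH; [| apply Hg; exact I].
      intros r Hr. apply Hnn; auto. exact I. }
    rewrite E. apply sumS_eq; auto. intros s _. eapply sum_on_ge0. apply Hg. exact I.
Qed.

End Enumeration.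

Definition distr_on {X : Type} (D : X -> Prop) (mu : X -> R) : Prop :=
  nonneg_on D mu /\ is_sum_on D mu 1.

Lemma distr_on_mixture {S X} (enc : S -> nat) (enc_inj : forall x y, enc x = enc y -> x = y)
    (D : X -> Prop) (w : S -> R) (mu : S -> X -> R) :
  distr_on full w -> (forall j, distr_on D (mu j)) ->
  distr_on D (fun x => sumS enc (fun j => w j * mu j x)).
Proof.
  intros [Hw0 Hw1] Hmu.
  set (h := fun x j => w j * mu j x).
  assert (Hh : forall x j, D x -> full j -> 0 <= h x j)
    by (intros x j Hx _; apply Rmult_le_pos; [apply Hw0; exact I | apply Hmu; auto]).
  assert (Hpairs : is_sum_on (prod_on full D) (fun z => h (snd z) (fst z)) 1).
  { apply (sum_on_prod_of_rows full D (fun j x => h x j) (fun j x _ Hx => Hh x j Hx I)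
             (fun j => w j * 1)).
    - intros j _. apply sum_on_scale; [apply Hw0; exact I | apply Hmu | apply Hmu].
    - apply sum_on_ext with w; [intros; ring | exact Hw1]. }
  apply (sum_on_prod_swap full D (fun j x => h x j)) in Hpairs.
  destruct (sum_on_rows_of_prod D full h Hh 1 Hpairs) as [g [Hg Hg1]].
  assert (E : forall x, D x -> sumS enc (h x) = g x).
  { intros x Hx. apply sumS_eq; auto. intros j _. apply Hh; auto. exact I. }
  split.
  - intros x Hx. change (0 <= sumS enc (h x)). rewrite E; auto. eapply sum_on_ge0, Hg; auto.
  - apply sum_on_ext with g; auto. intros x Hx. symmetry. apply E; auto.
Qed.

Lemma firstn_app_length {S} (a b : list S) : firstn (length a) (a ++ b) = a.
Proof. rewrite firstn_app, Nat.sub_diag, firstn_O, app_nil_r. apply firstn_all. Qed.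

Lemma skipn_app_length {S} (a b : list S) : skipn (length a) (a ++ b) = b.
Proof. rewrite skipn_app, Nat.sub_diag, skipn_all. reflexivity. Qed.

Lemma distr_on_concat {S : Type} (a b : nat) (f g : list S -> R) :
  distr_on (has_length a) f -> distr_on (has_length b) g ->
  distr_on (has_length (a + b)) (fun s => f (firstn a s) * g (skipn a s)).
Proof.
  intros [Hf0 Hf1] [Hg0 Hg1].
  split.
  { intros s Hs. unfold has_length in Hs.
    apply Rmult_le_pos; [apply Hf0 | apply Hg0]; unfold has_length;
      [rewrite length_firstn | rewrite length_skipn]; lia. }
  apply (sum_on_bij (prod_on (has_length a) (has_length b)) _ (fun z => fst z ++ snd z)).
  - intros [u v] [Hu Hv]; unfold has_length in *; simpl in *; rewrite length_app; lia.
  - intros [u v] [u' v'] [Hu Hv] [Hu' Hv'] E; unfold has_length in *; simpl in *.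
    assert (E1 : firstn (length u) (u ++ v) = firstn (length u') (u' ++ v'))
      by (rewrite Hu, Hu', E; reflexivity).
    rewrite !firstn_app_length in E1. subst u'.
    apply app_inv_head in E. subst; reflexivity.
  - intros s Hs. exists (firstn a s, skipn a s). unfold has_length in *.
    split; [split; simpl; [rewrite length_firstn | rewrite length_skipn]; lia | apply firstn_skipn].
  - apply sum_on_ext with (fun z => f (fst z) * g (snd z)).
    { intros [u v] [Hu Hv]; unfold has_length in Hu; simpl in *. subst a.
      rewrite firstn_app_length, skipn_app_length. reflexivity. }
    apply (sum_on_prod_of_rows _ _ (fun u v => f u * g v)
             (fun u v Hu Hv => Rmult_le_pos _ _ (Hf0 u Hu) (Hg0 v Hv)) (fun u => f u * 1)).
    + intros u Hu. apply sum_on_scale; auto.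
    + apply sum_on_ext with f; [intros; ring | exact Hf1].
Qed.

Lemma delta_bounds {S} (x y : S) : 0 <= delta x y <= 1.
Proof. unfold delta; destruct (excluded_middle_informative _); lra. Qed.

Lemma delta_eq {S} (x : S) : delta x x = 1.
Proof. unfold delta; destruct (excluded_middle_informative _); congruence. Qed.

Lemma delta_neq {S} (x y : S) : x <> y -> delta x y = 0.
Proof. unfold delta; destruct (excluded_middle_informative _); congruence. Qed.

Fixpoint tree_ind_children (P : tree -> Prop)
    (H : forall cs, Forall (fun e => P (snd e)) cs -> P (Node cs)) (t : tree) : P t :=
  match t with
  | Node cs => H cs ((fix g (cs : list (R * tree)) : Forall (fun e => P (snd e)) cs :=
      match cs with
      | [] => Forall_nil _
      | (l, c) :: cs' => @Forall_cons _ (fun e => P (snd e)) (l, c) cs' (tree_ind_children P H c) (g cs')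
      end) cs)
  end.

(* The anonymous recursions of [lawT], [nleaves] and [edges_pos] over the list of children. *)
Definition forest_law {S : Type} (enc : S -> nat) (p : R -> S -> S -> R) (i : S)
    (cs : list (R * tree)) (sigma : list S) : R :=
  (fix g (cs : list (R * tree)) (sigma : list S) : R :=
     match cs with
     | [] => match sigma with [] => 1 | _ => 0 end
     | (l, c) :: cs' =>
         sumS enc (fun j => p l i j * lawT enc p c j (firstn (nleaves c) sigma))
         * g cs' (skipn (nleaves c) sigma)
     end) cs sigma.

Definition forest_leaves (cs : list (R * tree)) : nat :=
  (fix g (cs : list (R * tree)) : nat :=
     match cs with
     | [] => 0%nat
     | (_, c) :: cs' => (nleaves c + g cs')%nat
     end) cs.

Definition forest_edges_pos (cs : list (R * tree)) : Prop :=
  (fix g (cs : list (R * tree)) : Prop :=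
     match cs with
     | [] => True
     | (l, c) :: cs' => 0 < l /\ edges_pos c /\ g cs'
     end) cs.

Section TreeLaw.
Context {S : Type} (enc : S -> nat) (enc_inj : forall x y, enc x = enc y -> x = y)
  (p : R -> S -> S -> R)
  (p_ge0 : forall t i j, 0 <= t -> 0 <= p t i j)
  (p_sum1 : forall t i, 0 <= t -> has_sumS enc (fun j => p t i j) 1).

Let law_is_distr (t : tree) : Prop :=
  edges_pos t -> forall i, distr_on (has_length (nleaves t)) (lawT enc p t i).

Lemma leaf_law_distr i : distr_on (has_length 1) (lawT enc p (Node []) i).
Proof.
  assert (Hnn : nonneg_on (has_length 1) (lawT enc p (Node []) i)).
  { intros [|x [|y s]] _; simpl; try lra. apply delta_bounds. }
  split; auto. rewrite <- (delta_eq i). change (delta i i) with (lawT enc p (Node []) i [i]).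
  apply (sum_on_single _ _ [i]); auto; [reflexivity|].
  intros [|x [|y s]] Hs Hn; try discriminate. simpl. apply delta_neq. congruence.
Qed.

Lemma edge_law_distr l c i : 0 <= l -> law_is_distr c -> edges_pos c ->
  distr_on (has_length (nleaves c)) (fun tau => sumS enc (fun j => p l i j * lawT enc p c j tau)).
Proof.
  intros Hl Hc Ec. apply distr_on_mixture; auto.
  assert (Hw : nonneg_on full (p l i)) by (intros j _; apply p_ge0; auto).
  split; auto. apply (has_sumS_sum_on enc enc_inj); auto.
Qed.

Lemma forest_law_distr cs : Forall (fun e => law_is_distr (snd e)) cs -> forest_edges_pos cs ->
  forall i, distr_on (has_length (forest_leaves cs)) (forest_law enc p i cs).
Proof.
  induction cs as [|[l c] cs IH]; intros HF He i.
  - assert (Hnn : nonneg_on (has_length 0) (forest_law enc p i [])) by (intros [|x s] _; simpl; lra).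
    split; auto. change 1 with (forest_law enc p i [] []). apply (sum_on_single _ _ []); auto; [reflexivity|].
    intros [|x s] Hs Hn; [contradiction | reflexivity].
  - inversion HF; subst. destruct He as [Hl [Hc Hcs]].
    change (distr_on (has_length (nleaves c + forest_leaves cs))
      (fun s => sumS enc (fun j => p l i j * lawT enc p c j (firstn (nleaves c) s))
                * forest_law enc p i cs (skipn (nleaves c) s))).
    apply (distr_on_concat _ _ (fun tau => sumS enc (fun j => p l i j * lawT enc p c j tau)));
      [apply edge_law_distr; auto; lra | apply IH; auto].
Qed.

Lemma lawT_distr t : edges_pos t -> forall i, distr_on (has_length (nleaves t)) (lawT enc p t i).
Proof.
  induction t as [[|e cs] Hcs] using tree_ind_children; intros He i.
  - apply leaf_law_distr.
  - exact (forest_law_distr (e :: cs) Hcs He i).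
Qed.

End TreeLaw.

Fixpoint argmax {S : Type} (g : S -> R) (d : S) (A : list S) : S :=
  match A with
  | [] => d
  | a :: A' => let b := argmax g d A' in if Rle_dec (g a) (g b) then b else a
  end.

Lemma argmax_spec {S} (g : S -> R) d A :
  In (argmax g d A) (d :: A) /\ forall x, In x A -> g x <= g (argmax g d A).
Proof.
  induction A as [|a A [IH1 IH2]]; simpl; [split; [auto | intros x []]|].
  destruct (Rle_dec (g a) (g (argmax g d A))).
  - split; [destruct IH1; auto|]. intros x [<-|Hx]; auto.
  - split; auto. intros x [<-|Hx]; [lra|]. specialize (IH2 x Hx). lra.
Qed.

Lemma Rmin_half_sum a b : Rmin a b = / 2 * (a + b) - / 2 * Rabs (a - b).
Proof. unfold Rmin, Rabs. destruct (Rle_dec _ _); destruct (Rcase_abs _); lra. Qed.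

Section FixedSize.
Context {S : Type} (enc : S -> nat) (enc_inj : forall x y, enc x = enc y -> x = y)
  (n : nat) (mu : S -> list S -> R) (mu_distr : forall i, distr_on (has_length n) (mu i)).

Let D := @has_length S n.

Lemma sum_on_min i j : is_sum_on D (fun s => Rmin (mu i s) (mu j s)) (1 - tv enc n (mu i) (mu j)).
Proof.
  destruct (mu_distr i) as [Ni Si], (mu_distr j) as [Nj Sj].
  pose proof (sum_on_add D _ _ _ _ Ni Nj Si Sj) as Sij.
  assert (Nij : nonneg_on D (fun s => mu i s + mu j s))
    by (intros s Hs; specialize (Ni s Hs); specialize (Nj s Hs); lra).
  assert (Nabs : nonneg_on D (fun s => Rabs (mu i s - mu j s))) by (intros s _; apply Rabs_pos).
  destruct (sum_on_bounded D _ _ Nij Sij _ Nabs) as [v [Hv _]].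
  { intros s Hs. specialize (Ni s Hs). specialize (Nj s Hs). unfold Rabs; destruct (Rcase_abs _); lra. }
  assert (Htv : tv enc n (mu i) (mu j) = / 2 * v) by (unfold tv; f_equal; apply (sumSn_eq enc enc_inj); auto).
  rewrite Htv. replace (1 - / 2 * v) with (/ 2 * (1 + 1) - / 2 * v) by field.
  apply sum_on_sub with (fun s => / 2 * Rabs (mu i s - mu j s)).
  - intros s Hs. specialize (Nabs s Hs). simpl in Nabs. lra.
  - intros s Hs. apply Rmin_glb; auto.
  - apply sum_on_scale; auto. lra.
  - apply sum_on_ext with (fun s => / 2 * (mu i s + mu j s)).
    + intros s _. rewrite Rmin_half_sum. ring.
    + apply sum_on_scale; auto. lra.
Qed.

Lemma tv_le1 i j : tv enc n (mu i) (mu j) <= 1.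
Proof. pose proof (sum_on_ge0 _ _ _ (sum_on_min i j)). lra. Qed.

Definition hit_prob (F : list S -> S) (i : S) : R := sumSn enc n (fun s => mu i s * delta (F s) i).

Lemma sum_on_hit F i : is_sum_on D (fun s => mu i s * delta (F s) i) (hit_prob F i) /\ hit_prob F i <= 1.
Proof.
  destruct (mu_distr i) as [Ni Si].
  assert (Nh : nonneg_on D (fun s => mu i s * delta (F s) i))
    by (intros s Hs; apply Rmult_le_pos; [auto | apply delta_bounds]).
  destruct (sum_on_bounded D _ _ Ni Si _ Nh) as [c [Hc Hc1]].
  { intros s Hs. pose proof (delta_bounds (F s) i). pose proof (Ni s Hs). nra. }
  unfold hit_prob. rewrite (sumSn_eq enc enc_inj n _ c); auto.
Qed.

Lemma sum_on_miss F i : is_sum_on D (fun s => mu i s * (1 - delta (F s) i)) (1 - hit_prob F i).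
Proof.
  destruct (mu_distr i) as [Ni Si].
  apply sum_on_sub with (fun s => mu i s * delta (F s) i); [| | apply sum_on_hit |].
  - intros s Hs. apply Rmult_le_pos; [auto | apply delta_bounds].
  - intros s Hs. pose proof (delta_bounds (F s) i). apply Rmult_le_pos; [auto | lra].
  - apply sum_on_ext with (mu i); auto. intros; ring.
Qed.

(* Any estimator's two hit probabilities are at most [1 + tv]: on each configuration
   at most one of [i], [j] is guessed, and [max = a + b - min]. *)
Lemma hit_prob_add_le F i j : i <> j -> hit_prob F i + hit_prob F j <= 1 + tv enc n (mu i) (mu j).
Proof.
  intros Hij.
  destruct (mu_distr i) as [Ni Si], (mu_distr j) as [Nj Sj].
  assert (Nmin : nonneg_on D (fun s => Rmin (mu i s) (mu j s))) by (intros s Hs; apply Rmin_glb; auto).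
  assert (Nmax : nonneg_on D (fun s => mu i s + mu j s - Rmin (mu i s) (mu j s))).
  { intros s Hs. pose proof (Rmin_l (mu i s) (mu j s)). pose proof (Nj s Hs). lra. }
  assert (Smax : is_sum_on D (fun s => mu i s + mu j s - Rmin (mu i s) (mu j s))
                   ((1 + 1) - (1 - tv enc n (mu i) (mu j)))).
  { apply sum_on_sub with (fun s => Rmin (mu i s) (mu j s)); auto; [apply sum_on_min|].
    apply sum_on_ext with (fun s => mu i s + mu j s); [intros; ring | apply sum_on_add; auto]. }
  assert (Shits : is_sum_on D (fun s => mu i s * delta (F s) i + mu j s * delta (F s) j)
                    (hit_prob F i + hit_prob F j)).
  { apply sum_on_add; try apply sum_on_hit;
      intros s Hs; apply Rmult_le_pos;
      [apply Ni | apply delta_bounds | apply Nj | apply delta_bounds]; auto. }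
  enough (hit_prob F i + hit_prob F j <= (1 + 1) - (1 - tv enc n (mu i) (mu j))) by lra.
  eapply sum_on_le; [| exact Shits | exact Smax]. intros s Hs. simpl.
  pose proof (Ni s Hs). pose proof (Nj s Hs).
  unfold Rmin. destruct (classic_eq_dec (F s) i) as [->|Hi].
  - rewrite delta_eq, delta_neq by auto. destruct (Rle_dec _ _); lra.
  - rewrite (delta_neq _ _ Hi). pose proof (delta_bounds (F s) j). destruct (Rle_dec _ _); nra.
Qed.

Definition overlap_off_diag (i : S) (A : list S) : R :=
  fsum (fun j => if classic_eq_dec i j then 0 else 1 - tv enc n (mu i) (mu j)) A.

Lemma overlap_off_diag_ge0 i A : 0 <= overlap_off_diag i A.
Proof.
  apply fsum_ge0. intros j _. destruct (classic_eq_dec i j); [lra|].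
  pose proof (tv_le1 i j). lra.
Qed.

(* Guessing the most likely root state within [A] fails on [i] only where some other
   [j] in [A] is at least as likely, which costs at most [min (mu i) (mu j)]. *)
Lemma miss_prob_argmax_le A d i : In i A -> In d A ->
  1 - hit_prob (fun s => argmax (fun j => mu j s) d A) i <= overlap_off_diag i A.
Proof.
  intros Hi Hd. set (F := fun s => argmax (fun j => mu j s) d A).
  destruct (mu_distr i) as [Ni _].
  set (m := fun j s => if classic_eq_dec i j then 0 else Rmin (mu i s) (mu j s)).
  assert (Nm : forall j s, D s -> 0 <= m j s).
  { intros j s Hs. unfold m. destruct (classic_eq_dec i j); [lra|]. apply Rmin_glb; apply mu_distr; auto. }
  assert (Sm : is_sum_on D (fun s => fsum (fun j => m j s) A) (overlap_off_diag i A)).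
  { apply sum_on_fsum.
    - intros j _ s Hs. apply Nm; auto.
    - intros j _. unfold m. destruct (classic_eq_dec i j); [apply sum_on_0; auto | apply sum_on_min]. }
  eapply sum_on_le; [| exact (sum_on_miss F i) | exact Sm]. intros s Hs. simpl.
  destruct (argmax_spec (fun j => mu j s) d A) as [Hin Hmax]. fold (F s) in Hin, Hmax.
  destruct (classic_eq_dec (F s) i) as [E|E].
  - rewrite E, delta_eq, Rminus_diag, Rmult_0_r. apply fsum_ge0. intros j _. apply Nm; auto.
  - rewrite (delta_neq _ _ E), Rminus_0_r, Rmult_1_r.
    assert (InF : In (F s) A) by (destruct Hin as [<-|H]; auto).
    apply Rle_trans with (m (F s) s).
    + unfold m. destruct (classic_eq_dec i (F s)); [congruence|].
      specialize (Hmax i Hi). unfold Rmin. destruct (Rle_dec _ _); lra.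
    + apply (fsum_term_le (fun j => m j s)); auto.
Qed.

End FixedSize.

Lemma eventually_fsum_lt {X} (A : list X) (u : nat -> X -> R) :
  (forall x, In x A -> forall e, 0 < e -> exists N, forall k, (N <= k)%nat -> u k x < e) ->
  forall e, 0 < e -> exists N, forall k, (N <= k)%nat -> fsum (u k) A < e.
Proof.
  induction A as [|a A IH]; intros H e He; [exists O; intros k _; simpl; lra|].
  destruct (H a (or_introl eq_refl) (e / 2)) as [N1 H1]; [lra|].
  destruct (IH (fun x Hx => H x (or_intror Hx)) (e / 2)) as [N2 H2]; [lra|].
  exists (Nat.max N1 N2). intros k Hk. simpl.
  specialize (H1 k ltac:(lia)). specialize (H2 k ltac:(lia)). lra.
Qed.

Fixpoint last_true (g : nat -> bool) (m : nat) : nat :=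
  match m with
  | O => O
  | Datatypes.S m' => if g m then m else last_true g m'
  end.

Lemma last_true_spec g M m : g M = true -> (M <= m)%nat ->
  (M <= last_true g m)%nat /\ g (last_true g m) = true.
Proof.
  intros HM. induction m as [|m IH]; intros Hm; simpl.
  - replace M with O in HM by lia. auto.
  - destruct (g (Datatypes.S m)) eqn:E; [auto|].
    destruct (Nat.eq_dec M (Datatypes.S m)) as [->|]; [congruence | apply IH; lia].
Qed.

Lemma tolerance_antitone m m' : (m <= m')%nat -> / INR (Datatypes.S m') <= / INR (Datatypes.S m).
Proof.
  intros H. apply Rinv_le_contravar; [apply lt_0_INR; lia | apply le_INR; lia].
Qed.

Section Estimation.
Context {S : Type} (enc : S -> nat) (enc_inj : forall x y, enc x = enc y -> x = y)
  (pi : S -> R) (pi_distr : distr_on full pi)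
  (mu : nat -> S -> list S -> R)
  (mu_distr : forall k, (1 <= k)%nat -> forall i, distr_on (has_length k) (mu k i)).

Definition success (k : nat) (F : list S -> S) : R :=
  sumS enc (fun i => pi i * hit_prob enc k (mu k) F i).

Lemma sum_on_weighted_hit k F : (1 <= k)%nat ->
  is_sum_on full (fun i => pi i * hit_prob enc k (mu k) F i) (success k F) /\ success k F <= 1.
Proof.
  intros Hk. destruct pi_distr as [Npi Spi].
  assert (Hh : forall i, 0 <= hit_prob enc k (mu k) F i <= 1).
  { intros i. destruct (sum_on_hit enc enc_inj k (mu k) (mu_distr k Hk) F i) as [H1 H2].
    split; [eapply sum_on_ge0; eauto | auto]. }
  assert (Nw : nonneg_on full (fun i => pi i * hit_prob enc k (mu k) F i))
    by (intros i _; apply Rmult_le_pos; [apply Npi; exact I | apply Hh]).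
  destruct (sum_on_bounded full pi 1 Npi Spi _ Nw) as [P [HP HP1]].
  { intros i _. pose proof (Npi i I). pose proof (Hh i). nra. }
  unfold success. rewrite (sumS_eq enc enc_inj _ P); auto.
Qed.

Lemma sum_on_weighted_miss k F : (1 <= k)%nat ->
  is_sum_on full (fun i => pi i * (1 - hit_prob enc k (mu k) F i)) (1 - success k F).
Proof.
  intros Hk. destruct pi_distr as [Npi Spi].
  assert (Hh : forall i, hit_prob enc k (mu k) F i <= 1)
    by (intros i; apply (sum_on_hit enc enc_inj k (mu k) (mu_distr k Hk))).
  apply sum_on_sub with (fun i => pi i * hit_prob enc k (mu k) F i); [| | apply sum_on_weighted_hit; auto |].
  - intros i _. apply Rmult_le_pos; [apply Npi; exact I|].
    eapply sum_on_ge0, (sum_on_hit enc enc_inj k (mu k) (mu_distr k Hk)).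
  - intros i _. apply Rmult_le_pos; [apply Npi; exact I | specialize (Hh i); lra].
  - apply sum_on_ext with pi; auto. intros; ring.
Qed.

Lemma tv_gap_le_miss k F i j : (1 <= k)%nat -> i <> j ->
  Rmin (pi i) (pi j) * (1 - tv enc k (mu k i) (mu k j)) <= 1 - success k F.
Proof.
  intros Hk Hij. set (h := hit_prob enc k (mu k) F).
  assert (Hpair : pi i * (1 - h i) + pi j * (1 - h j) <= 1 - success k F).
  { pose proof (proj1 (sum_on_weighted_miss k F Hk) [i; j]) as H.
    simpl in H. rewrite Rplus_0_r in H. apply H; [| intros x _; exact I].
    repeat constructor; [intros [E|[]]; auto | intros []]. }
  pose proof (hit_prob_add_le enc enc_inj k (mu k) (mu_distr k Hk) F i j Hij). fold h in H.
  pose proof (Rmin_l (pi i) (pi j)). pose proof (Rmin_r (pi i) (pi j)).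
  pose proof (proj2 (sum_on_hit enc enc_inj k (mu k) (mu_distr k Hk) F i)).
  pose proof (proj2 (sum_on_hit enc enc_inj k (mu k) (mu_distr k Hk) F j)).
  fold h in H2, H3.
  assert (0 <= Rmin (pi i) (pi j)) by (apply Rmin_glb; apply (proj1 pi_distr); exact I).
  nra.
Qed.

Lemma success_argmax_ge k A d : (1 <= k)%nat -> NoDup A -> In d A ->
  fsum pi A - fsum (fun i => overlap_off_diag enc k (mu k) i A) A <=
  success k (fun s => argmax (fun j => mu k j s) d A).
Proof.
  intros Hk NA Hd. set (F := fun s => argmax (fun j => mu k j s) d A).
  destruct pi_distr as [Npi Spi].
  apply Rle_trans with (fsum (fun i => pi i * hit_prob enc k (mu k) F i) A).
  2: { apply (sum_on_weighted_hit k F Hk); auto. intros x _; exact I. }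
  rewrite <- fsum_sub. apply fsum_le. intros i Hi.
  pose proof (miss_prob_argmax_le enc enc_inj k (mu k) (mu_distr k Hk) A d i Hi Hd).
  pose proof (overlap_off_diag_ge0 enc enc_inj k (mu k) (mu_distr k Hk) i A).
  pose proof (Npi i I). pose proof (sum_on_term_le full pi 1 i Spi I).
  fold F in H. nra.
Qed.

Lemma tv_liminf_of_consistent (F : nat -> list S -> S) :
  liminf_is (fun k => success k (F k)) 1 ->
  forall i j, i <> j -> 0 < Rmin (pi i) (pi j) ->
  liminf_is (fun k => tv enc k (mu k i) (mu k j)) 1.
Proof.
  intros [Hcons _] i j Hij Hm. split.
  - intros eps He. set (m := Rmin (pi i) (pi j)) in *.
    destruct (Hcons (eps * m)) as [N HN]; [apply Rmult_lt_0_compat; auto|].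
    exists (Nat.max N 1). intros k Hk.
    pose proof (HN k ltac:(lia)). pose proof (tv_gap_le_miss k (F k) i j ltac:(lia) Hij).
    fold m in H0. nra.
  - intros eps He N. exists (Nat.max N 1). split; [lia|].
    pose proof (tv_le1 enc enc_inj _ (mu (Nat.max N 1)) (mu_distr (Nat.max N 1) ltac:(lia)) i j). lra.
Qed.

Lemma fsum_filter_pos (f : S -> R) (L : list S) : (forall x, 0 <= f x) ->
  fsum f (filter (fun x => if Rlt_dec 0 (f x) then true else false) L) = fsum f L.
Proof.
  intros H. induction L as [|a L IH]; simpl; auto.
  destruct (Rlt_dec 0 (f a)); simpl; rewrite IH; auto.
  assert (f a = 0) as -> by (specialize (H a); lra). ring.
Qed.

Lemma finite_mass_approx eps : 0 < eps ->
  exists A, NoDup A /\ (forall x, In x A -> 0 < pi x) /\ 1 - eps < fsum pi A.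
Proof.
  intros He. destruct pi_distr as [Npi [_ Lo]].
  destruct (Lo eps He) as [L [N [_ HL]]].
  exists (filter (fun x => if Rlt_dec 0 (pi x) then true else false) L). split; [|split].
  - apply NoDup_filter; auto.
  - intros x Hx. apply filter_In in Hx. destruct Hx as [_ Hx].
    destruct (Rlt_dec 0 (pi x)); [auto | discriminate].
  - rewrite fsum_filter_pos; auto. intros x; apply Npi; exact I.
Qed.

Definition overlap (k : nat) (A : list S) : R :=
  fsum (fun i => overlap_off_diag enc k (mu k) i A) A.

Section Backward.
Hypothesis tv_to_1 : forall i j, i <> j -> 0 < Rmin (pi i) (pi j) ->
  liminf_is (fun k => tv enc k (mu k i) (mu k j)) 1.

Lemma overlap_eventually_small A : (forall x, In x A -> 0 < pi x) ->
  forall e, 0 < e -> exists N, forall k, (N <= k)%nat -> overlap k A < e.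
Proof.
  intros HA. apply eventually_fsum_lt. intros i Hi.
  apply eventually_fsum_lt. intros j Hj e He.
  destruct (classic_eq_dec i j) as [Eij|Nij]; [exists O; intros; lra|].
  destruct (proj1 (tv_to_1 i j Nij (Rmin_glb_lt _ _ _ (HA i Hi) (HA j Hj))) e He) as [N HN].
  exists N. intros k Hk. specialize (HN k Hk). lra.
Qed.

(* For each [k] the estimator guesses the most likely state in the largest of the
   finite sets [A m], [m <= k], for which the overlap bound already certifies
   success probability [1 - 2 / (m + 1)]. *)
Lemma consistent_of_tv_liminf : exists F : nat -> list S -> S, liminf_is (fun k => success k (F k)) 1.
Proof.
  set (tol := fun m : nat => / INR (Datatypes.S m)).
  assert (tol_pos : forall m, 0 < tol m) by (intro m; apply Rinv_0_lt_compat, lt_0_INR; lia).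
  destruct (choice _ (fun m => finite_mass_approx (tol m) (tol_pos m))) as [A HA].
  assert (Hne : forall m, A m <> []).
  { intros m E. destruct (HA m) as [_ [_ H]]. rewrite E in H. simpl in H.
    pose proof (tolerance_antitone 0 m ltac:(lia)). unfold tol in H. simpl in *. lra. }
  destruct (A 0%nat) as [|s0 ?] eqn:E0; [exfalso; exact (Hne 0%nat E0)|].
  set (good := fun k m => if Rlt_dec (1 - 2 * tol m) (fsum pi (A m) - overlap k (A m)) then true else false).
  set (sel := fun k => last_true (good k) k).
  set (F := fun k s => argmax (fun j => mu k j s) (hd s0 (A (sel k))) (A (sel k))).
  exists F.
  assert (Key : forall k, (1 <= k)%nat -> good k (sel k) = true -> 1 - 2 * tol (sel k) < success k (F k)).
  { intros k Hk Hg. unfold good in Hg. destruct (Rlt_dec _ _) as [Hlt|]; [|discriminate].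
    destruct (HA (sel k)) as [NA _].
    eapply Rlt_le_trans; [exact Hlt|]. apply success_argmax_ge; auto.
    destruct (A (sel k)) eqn:EA; [exfalso; exact (Hne _ EA) | left; reflexivity]. }
  split.
  - intros eps He.
    destruct (archimed_cor1 (eps / 2)) as [N0 [HN0 N0pos]]; [lra|].
    set (M := pred N0). assert (tolM : tol M < eps / 2) by (unfold tol, M; rewrite Nat.succ_pred_pos; auto).
    destruct (HA M) as [_ [PA mass]].
    destruct (overlap_eventually_small (A M) PA (tol M) (tol_pos M)) as [K HK].
    exists (Nat.max K (Nat.max M 1)). intros k Hk.
    assert (HgM : good k M = true).
    { unfold good. destruct (Rlt_dec _ _) as [|Hn]; auto. specialize (HK k ltac:(lia)). lra. }
    destruct (last_true_spec (good k) M k HgM ltac:(lia)) as [Hsel Hg].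
    pose proof (Key k ltac:(lia) Hg). pose proof (tolerance_antitone M (sel k) Hsel).
    unfold tol in *. lra.
  - intros eps He N. exists (Nat.max N 1). split; [lia|].
    pose proof (proj2 (sum_on_weighted_hit (Nat.max N 1) (F (Nat.max N 1)) ltac:(lia))). lra.
Qed.

End Backward.

End Estimation.

Theorem mainTheorem6 (S : Type) (enc : S -> nat)
  (enc_inj : forall x y : S, enc x = enc y -> x = y)
  (p : R -> S -> S -> R) (T : nat -> tree) (pi : S -> R)
  (Hmarkov : is_markov_semigroup enc p)
  (Hpos : forall k, edges_pos (T k))
  (Hleaves : forall k, (1 <= k)%nat -> nleaves (T k) = k)
  (Hnested : nested T)
  (Hheight : exists H : R, forall k, height (T k) <= H)
  (Hrows : forall t, 0 <= t -> forall i j : S, i <> j -> exists l : S, p t i l <> p t j l)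
  (Hpi : is_distr enc pi) :
  (exists F : nat -> list S -> S, consistent enc p T pi F) <->
  (forall i j : S, i <> j -> 0 < Rmin (pi i) (pi j) ->
     liminf_is (fun k => tv enc k (lawT enc p (T k) i) (lawT enc p (T k) j)) 1).
Proof.
  destruct Hmarkov as [p_ge0 [p_sum1 _]].
  assert (pi_distr : distr_on full pi).
  { destruct Hpi as [Hpi0 Hpi1]. assert (Hnn : nonneg_on full pi) by (intros i _; auto).
    split; auto. apply (has_sumS_sum_on enc enc_inj); auto. }
  set (mu := fun k => lawT enc p (T k)).
  assert (mu_distr : forall k, (1 <= k)%nat -> forall i, distr_on (has_length k) (mu k i)).
  { intros k Hk i. unfold mu. rewrite <- (Hleaves k Hk) at 1. apply lawT_distr; auto. }
  split.
  - intros [F HF]. exact (tv_liminf_of_consistent enc enc_inj pi pi_distr mu mu_distr F HF).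
  - intros Htv. exact (consistent_of_tv_liminf enc enc_inj pi pi_distr mu mu_distr Htv).
Qed.
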